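(* Let $0\le d<r\le\min\{m,n\}$ and $\mathcal{R}\in\mathcal{Z}_{n,m,d}$. Then \[\mathfrak{m}(\mathcal{R})\equiv\frac{1}{r-d}\sum_{\mathcal{R}'}\mathfrak{m}(\mathcal{R}')\pmod{\mathbf{I}(\mathcal{Z}_{n,m,r})},\] where the sum runs over all rook placements $\mathcal{R}'\supseteq\mathcal{R}$ with $|\mathcal{R}'|=d+1$.
   Context: Fix positive integers $n,m$. $\mathbb{C}[\mathbf{x}_{n\times m}]$ is the polynomial ring in variables $x_{i,j}$ ($1\le i\le n,1\le j\le m$). A rook placement on the $n\times m$ board is a subset $\mathcal{R}\subseteq[n]\times[m]$ with at most one element in each row and column, identified with its $0/1$ matrix in $\mathrm{Mat}_{n\times m}(\mathbb{C})$; $\mathcal{Z}_{n,m,d}$ is the set of rook placements with exactly $d$ elements; $\mathfrak{m}(\mathcal{R}):=\prod_{(i,j)\in\mathcal{R}}x_{i,j}$. $\mathbf{I}(\mathcal{Z})$ is the ideal of polynomials vanishing on the finite set $\mathcal{Z}$. *)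

From HB Require Import structures.
From mathcomp Require Import all_boot all_order all_algebra all_field.
From mathcomp Require Import mpoly.
Set Implicit Arguments. Unset Strict Implicit. Unset Printing Implicit Defensive.
Import Order.TTheory GRing.Theory Num.Theory.
Local Open Scope ring_scope.

Definition xvar (n m : nat) (i : 'I_n) (j : 'I_m) : {mpoly algC[n * m]} :=
  'X_(mxvec_index i j).

Definition is_rook (n m : nat) (R : {set 'I_n * 'I_m}) : bool :=
  [forall x in R, forall y in R,
     ((x.1 == y.1) ==> (x == y)) && ((x.2 == y.2) ==> (x == y))].

Definition Zrook (n m d : nat) : {set {set 'I_n * 'I_m}} :=
  [set R | is_rook R & #|R| == d].

Definition rook_mx (n m : nat) (R : {set 'I_n * 'I_m}) : 'M[algC]_(n, m) :=
  \matrix_(i, j) (if (i, j) \in R then 1 else 0).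

Definition eval_at (n m : nat) (A : 'M[algC]_(n, m)) (p : {mpoly algC[n * m]}) : algC :=
  p.@[fun k => mxvec A 0 k].

Definition rook_monomial (n m : nat) (R : {set 'I_n * 'I_m}) : {mpoly algC[n * m]} :=
  \prod_(ij in R) xvar ij.1 ij.2.

(* I(Z): the ideal of polynomials vanishing on a finite set Z of points
   (here Z is a set of rook placements, identified with their matrices). *)
Definition vanishing_ideal (n m : nat) (Z : {set {set 'I_n * 'I_m}}) :
  pred {mpoly algC[n * m]} :=
  fun p => [forall R in Z, eval_at (rook_mx R) p == 0].

Definition congr_mod_I (n m : nat) (Z : {set {set 'I_n * 'I_m}})
  (p q : {mpoly algC[n * m]}) : Prop :=
  p - q \in vanishing_ideal Z.

From HB Require Import structures.
From mathcomp Require Import all_boot all_order all_algebra all_field.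
From mathcomp Require Import mpoly.
Import Order.TTheory GRing.Theory Num.Theory.
Local Open Scope ring_scope.

(** Both sides are compared pointwise on the placements [S] of size [r].
    At [S], the monomial of [R] evaluates to the indicator of [R \subset S],
    and the sum evaluates to the number of one-point extensions of [R]
    inside [S] (these are automatically rook placements), namely [r - d]
    when [R \subset S] and [0] otherwise. *)

Lemma eval_rook_monomial {n m : nat} (S R : {set 'I_n * 'I_m}) :
  eval_at (rook_mx S) (rook_monomial R) = (R \subset S)%:R.
Proof.
rewrite /eval_at /rook_monomial rmorph_prod /=.
under eq_bigr => ij _ do rewrite /xvar mevalXU mxvecE mxE -surjective_pairing.
have [/subsetP sRS | /subsetPn [ij ijR ijS]] := boolP (R \subset S).
  by apply: big1 => ij /sRS ->.
by rewrite (bigD1 ij) //= (negbTE ijS) mul0r.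
Qed.

Lemma is_rook_subset {n m : nat} {S R : {set 'I_n * 'I_m}} :
  is_rook S -> R \subset S -> is_rook R.
Proof.
move=> /forallP rookS /subsetP sRS; apply/forallP => x; apply/implyP => xR.
apply/forallP => y; apply/implyP => yR.
by have /forallP/(_ y) := implyP (rookS x) (sRS _ xR); rewrite (sRS _ yR).
Qed.

Section OnePointExtensions.

Context {T : finType} {R S : {set T}}.
Hypothesis sRS : R \subset S.

Lemma one_point_extensionsE :
  [set R' : {set T} | [&& R \subset R', R' \subset S & #|R'| == #|R|.+1]]
    = [set e |: R | e in S :\: R].
Proof.
apply/setP => R'; rewrite !inE; apply/idP/imsetP.
  case/and3P => sRR' sR'S /eqP cR'.
  have /cards1P [e eR'R] : #|R' :\: R| == 1%N.
    by rewrite cardsD (setIidPr sRR') cR' subSnn.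
  have : e \in R' :\: R by rewrite eR'R set11.
  rewrite inE => /andP [eR eR']; exists e; first by rewrite inE eR (subsetP sR'S).
  apply/setP => x; rewrite !inE; have [xR | xR] := boolP (x \in R).
    by rewrite orbT (subsetP sRR').
  by rewrite orbF -in_set1 -eR'R inE xR.
case=> e /setDP [eS eR] ->.
by rewrite subsetUr subUset sub1set eS sRS cardsU1 eR add1n eqxx.
Qed.

Lemma card_one_point_extensions :
  #|[set R' : {set T} | [&& R \subset R', R' \subset S & #|R'| == #|R|.+1]]|
    = (#|S| - #|R|)%N.
Proof.
rewrite one_point_extensionsE card_in_imset; last first.
  move=> e1 e2 /setDP [_ e1R] _ e12.
  have /setU1P [] // : e1 \in e2 |: R by rewrite -e12 setU11.
  by move=> e1R'; rewrite e1R' in e1R.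
by rewrite cardsD (setIidPr sRS).
Qed.

End OnePointExtensions.

Lemma eval_sum_one_point_extensions {n m : nat} (S R : {set 'I_n * 'I_m}) :
  is_rook S ->
  eval_at (rook_mx S)
    (\sum_(R' in Zrook n m #|R|.+1 | R \subset R') rook_monomial R')
  = (R \subset S)%:R * (#|S| - #|R|)%:R.
Proof.
move=> rookS; rewrite /eval_at raddf_sum /=.
under eq_bigr => R' _ do rewrite -/(eval_at _ _) eval_rook_monomial.
rewrite -natr_sum -natrM; congr _%:R; rewrite -big_mkcondr /= sum1_card.
have [sRS | nsRS] := boolP (R \subset S); last first.
  rewrite mul0n; apply: eq_card0 => R'; apply/andP => -[/andP [_ sRR'] sR'S].
  by rewrite (subset_trans sRR' sR'S) in nsRS.
rewrite mul1n -(card_one_point_extensions sRS).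
apply: eq_card => R'; rewrite unfold_in /= !inE.
have [sR'S | _] := boolP (R' \subset S); last by rewrite !andbF.
by rewrite (is_rook_subset rookS sR'S) andbT andbC.
Qed.

Theorem mainTheorem9 (n m d r : nat) (R : {set 'I_n * 'I_m}) :
  (d < r)%N -> (r <= minn m n)%N -> R \in Zrook n m d ->
  congr_mod_I (Zrook n m r) (rook_monomial R)
    (((r - d)%:R)^-1 *:
       \sum_(R' in Zrook n m d.+1 | R \subset R') rook_monomial R').
Proof.
(* [r <= minn m n] only makes [Zrook n m r] nonempty; the congruence holds regardless. *)
move=> ltdr _; rewrite inE => /andP [_ /eqP cR].
rewrite /congr_mod_I /vanishing_ideal unfold_in; apply/forallP => S.
apply/implyP; rewrite inE => /andP [rookS /eqP cS].
rewrite /eval_at mevalB mevalZ -/(eval_at _ _).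
rewrite -[(\sum_(_ in _ | _) _).@[_]]/(eval_at _ _) -cR.
rewrite eval_sum_one_point_extensions // eval_rook_monomial cS cR.
have rd_neq0 : (r - d)%:R != 0 :> algC by rewrite pnatr_eq0 subn_eq0 -ltnNge.
by apply/eqP; rewrite mulrCA mulVf // mulr1 subrr.
Qed.
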